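(* Let $(M,\mathcal{T})$ be a closed pseudo $3$-manifold with $v(e)\ge9$ for every $e\in E$. Let $\{l(t):t\in[0,\infty)\}\subset\mathbb{R}^E_{>0}$ be the solution of the extended Ricci flow with initial data $l^0\in(0,\operatorname{arccosh}2)^E$ satisfying $l^0_e\in(\operatorname{arccosh}(1+\mu_{v(e)}),\operatorname{arccosh}(b_{v(e)}))$ for all $e\in E$. If there exists $t_0>0$ with $\sup\{l_e(t):0\le t\le t_0,\ e\in E\}\le\operatorname{arccosh}2$, then for all $t\in[0,t_0]$ and all $e\in E$, $$l_e(t)\in[\operatorname{arccosh}(1+\mu_{v(e)}),\operatorname{arccosh}b_{v(e)}]\subset(0,\operatorname{arccosh}2].$$
   Context: A closed pseudo $3$-manifold $(M,\mathcal{T})$: a finite disjoint union $\widehat{\mathcal{T}}$ of tetrahedra with faces glued in pairs by affine homeomorphisms; $\mathcal{T}$ the quotient complex, $E$ its edge set, $P_E$ the quotient map on edges, $v(e)=|P_E^{-1}(e)|$. For an interval $I$, $I^E=\{l: l_e\in I\ \forall e\}$. For $l\in\mathbb{R}^E_{>0}$ each edge $\hat e$ of $\widehat{\mathcal{T}}$ gets length $l_{P_E(\hat e)}$; in a tetrahedron with vertices $i,j,k,h$ let $x_{ab}=\cosh$(length of $ab$) and $$\phi_{ij}=\frac{x_{ik}x_{ih}+x_{jk}x_{jh}+x_{ij}x_{ik}x_{jh}+x_{ij}x_{ih}x_{jk}-x_{ij}^2x_{kh}+x_{kh}}{\sqrt{2x_{ij}x_{ik}x_{jk}+x_{ij}^2+x_{ik}^2+x_{jk}^2-1}\sqrt{2x_{ij}x_{ih}x_{jh}+x_{ij}^2+x_{ih}^2+x_{jh}^2-1}},$$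 dihedral angle $\alpha_{ij}=\arccos(\max\{-1,\min\{\phi_{ij},1\}\})$; $\widetilde K_e(l)=2\pi-\sum_{\hat e\in P_E^{-1}(e)}\alpha(\hat e)$. Extended Ricci flow: $\frac{d}{dt}l_e=\widetilde K_e(l)l_e$, $l(0)=l^0$ (unique solution for all $t\ge0$). Constants: $b_9=2$, $b_n=\frac{16}{1+\cos(2\pi/n)}-7$ ($n\ge10$). $\eta_\xi(y)=\frac{-2-5y+(1+\xi)^2+\sqrt{(2+5y-(1+\xi)^2)^2+4(2+y)(1-y)(1+\xi)^2}}{2+y}$; $\xi_1=0$, $\xi_{k+1}=\eta_{\xi_k}(\cos(2\pi/9))$, $\xi_\infty=\lim_k\xi_k$ (the sequence is nondecreasing and bounded); $\mu_n=\eta_{\xi_\infty}(\cos(2\pi/n))$ for $n\ge9$. *)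

From mathcomp Require Import all_boot.
From mathcomp Require Import fingroup perm.
From Stdlib Require Import Reals.
From Coquelicot Require Import Coquelicot.

Set Implicit Arguments.
Unset Strict Implicit.
Unset Printing Implicit Defensive.

Local Open Scope R_scope.

Definition arccosh (x : R) : R := ln (x + sqrt (x * x - 1)).

(* A tetrahedron has vertices 'I_4; its face (t,i) is the face opposite
   vertex i.  An edge of the disjoint union of tetrahedra is a pair (t,s)
   with s a 2-element subset of the vertices of t. *)
Definition hedge (tet : finType) : finType :=
  {x : tet * {set 'I_4} | #|x.2| == 2%nat}.

(* one-step gluing relation on edges of hat-T: the edge s of t lying in face
   (t,i) is identified with its image in the glued face. *)
Definition glue_rel (tet : finType) (fpair : tet * 'I_4 -> tet * 'I_4)
    (fmap : tet * 'I_4 -> {perm 'I_4}) : rel (hedge tet) :=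
  fun x y => [exists i : 'I_4,
    (i \notin (val x).2) &&
    (val y == ((fpair ((val x).1, i)).1, fmap ((val x).1, i) @: (val x).2))].

Record pseudo3 := Pseudo3 {
  tet : finType;
  (* faces glued in pairs: fixed-point-free involution (closed: every face glued) *)
  fpair : tet * 'I_4 -> tet * 'I_4;
  fpair_invol : forall f, fpair (fpair f) = f;
  fpair_nofix : forall f, fpair f <> f;
  (* the affine gluing homeomorphism of face f onto face fpair f, given by its
     action on vertices (a vertex bijection sending the opposite vertex of f
     to the opposite vertex of fpair f) *)
  fmap : tet * 'I_4 -> {perm 'I_4};
  fmap_opp : forall f, fmap f f.2 = (fpair f).2;
  fmap_inv : forall f, fmap (fpair f) = (fmap f)^-1%g;
  (* edge set E of the quotient complex and quotient map P_E *)
  edgE : finType;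
  PE : hedge tet -> edgE;
  PE_surj : forall e, exists x, PE x = e;
  PE_ker : forall x y : hedge tet,
      PE x = PE y <-> connect (fun a b => glue_rel fpair fmap a b || glue_rel fpair fmap b a) x y
}.

Definition vdeg (M : pseudo3) (e : edgE M) : nat := #|[set x | PE x == e]|.

Definition elen (M : pseudo3) (l : edgE M -> R) (t : tet M) (a b : 'I_4) : R :=
  match @insub _ (fun x : tet M * {set 'I_4} => #|x.2| == 2%nat) (hedge (tet M))
          (t, [set a; b]) with
  | Some y => l (PE y)
  | None => 0
  end.

Definition phi_formula (xij xik xih xjk xjh xkh : R) : R :=
  (xik * xih + xjk * xjh + xij * xik * xjh + xij * xih * xjk
     - xij ^ 2 * xkh + xkh) /
  (sqrt (2 * xij * xik * xjk + xij ^ 2 + xik ^ 2 + xjk ^ 2 - 1) *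
   sqrt (2 * xij * xih * xjh + xij ^ 2 + xih ^ 2 + xjh ^ 2 - 1)).

Definition dihedral (M : pseudo3) (l : edgE M -> R) (he : hedge (tet M)) : R :=
  let t := (val he).1 in
  let s := (val he).2 in
  let i := nth ord0 (enum s) 0 in
  let j := nth ord0 (enum s) 1 in
  let k := nth ord0 (enum (~: s)) 0 in
  let h := nth ord0 (enum (~: s)) 1 in
  let x := fun a b => cosh (elen l t a b) in
  acos (Rmax (-1) (Rmin (phi_formula (x i j) (x i k) (x i h) (x j k) (x j h) (x k h)) 1)).

Definition Ktilde (M : pseudo3) (l : edgE M -> R) (e : edgE M) : R :=
  2 * PI - \big[Rplus/0]_(x : hedge (tet M) | PE x == e) dihedral l x.

Definition ext_ricci_flow (M : pseudo3) (l0 : edgE M -> R) (l : R -> edgE M -> R) : Prop :=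
  l 0 = l0 /\
  (forall t e, 0 <= t -> 0 < l t e) /\
  (forall e, filterlim (fun s => l s e) (at_right 0) (locally (l0 e))) /\
  (forall t e, 0 < t -> is_derive (fun s => l s e) t (Ktilde (l t) e * l t e)).

Definition b_const (n : nat) : R :=
  if (n == 9)%nat then 2 else 16 / (1 + cos (2 * PI / INR n)) - 7.

Definition eta (xi y : R) : R :=
  (-2 - 5 * y + (1 + xi) ^ 2 +
   sqrt ((2 + 5 * y - (1 + xi) ^ 2) ^ 2 + 4 * (2 + y) * (1 - y) * (1 + xi) ^ 2))
  / (2 + y).

(* xi_seq k = xi_{k+1} *)
Fixpoint xi_seq (k : nat) : R :=
  match k with
  | O => 0
  | S k' => eta (xi_seq k') (cos (2 * PI / 9))
  end.

Definition xi_inf : R := real (Lim_seq xi_seq).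

Definition mu_const (n : nat) : R := eta xi_inf (cos (2 * PI / INR n)).

Set Warnings "-notation-overridden,-ambiguous-paths".
From mathcomp Require Import all_boot.
From Stdlib Require Import Reals Lra.
From Coquelicot Require Import Coquelicot.
Set Implicit Arguments.
Unset Strict Implicit.
Local Open Scope R_scope.

(* While all edge lengths lie in [0, arccosh 2], every x = cosh(length) lies in
   [1, 2], and on this box the cosine phi of the dihedral angle at an edge with
   x = a satisfies 2(2-a)/(1+a) <= phi <= (9-a)/(a+7); after squaring, both are
   polynomial inequalities certified by nonnegative Bernstein expansions.
   The constants are tuned to these bounds: cos(2 pi/n) = (9-b_n)/(b_n+7) for
   n >= 10, and cos(2 pi/n) <= 2(2-a)/(1+a) whenever a <= 1 + mu_n.  So above
   arccosh b_{v(e)} each of the v(e) angles at e is at least 2 pi/v(e) and the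
   curvature K_e is nonpositive, while below arccosh(1 + mu_{v(e)}) it is
   nonnegative.  Since dl_e/dt = K_e l_e with l_e > 0, the flow cannot cross
   either barrier.  For v(e) = 9 the upper bound b_9 = 2 is the assumed a
   priori bound itself. *)

Lemma Rdiv_le_Rdiv (x y u v : R) : 0 < y -> 0 < v -> x * v <= u * y -> x / y <= u / v.
Proof.
  move=> Hy Hv Hxu.
  have -> : x / y = u / v - (u * y - x * v) / (y * v) by field; lra.
  have : 0 <= (u * y - x * v) / (y * v) by apply: Rdiv_le_0_compat; nra.
  lra.
Qed.

Lemma sqrt_le_of_le_sqr (X Y : R) : 0 <= Y -> X <= Y ^ 2 -> sqrt X <= Y.
Proof. by move=> HY HX; rewrite -(sqrt_pow2 Y HY); apply: sqrt_le_1_alt. Qed.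

Lemma lt_sqrt_sqr_add (A D : R) : 0 < D -> A < sqrt (A ^ 2 + D).
Proof.
  move=> HD; case: (Rle_or_lt A 0) => HA.
  - have : 0 < sqrt (A ^ 2 + D) by apply: sqrt_lt_R0; nra.
    lra.
  - rewrite -{1}(sqrt_pow2 A); last lra.
    apply: sqrt_lt_1_alt; nra.
Qed.

Lemma le_mul_sqrt (x k D : R) : 0 <= k -> 0 <= D -> x ^ 2 <= k ^ 2 * D -> x <= k * sqrt D.
Proof.
  move=> Hk HD H; apply: Rsqr_incr_0_var; last by apply: Rmult_le_pos; [|apply: sqrt_pos].
  by rewrite !Rsqr_pow2 Rpow_mult_distr pow2_sqrt.
Qed.

Lemma mul_sqrt_le (x k D : R) : 0 <= x -> 0 <= D -> k ^ 2 * D <= x ^ 2 -> k * sqrt D <= x.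
Proof.
  move=> Hx HD H; apply: Rsqr_incr_0_var => //.
  by rewrite !Rsqr_pow2 Rpow_mult_distr pow2_sqrt.
Qed.

Lemma INR_le_of_leq (m n : nat) : (m <= n)%nat -> INR m <= INR n.
Proof. by move/leP/le_INR. Qed.

Lemma PI_le : PI <= 68 / 21.
Proof.
  have [_ H] := PI_2_3_7_ineq 0.
  rewrite /= /tg_alt /PI_2_3_7_tg /Ratan_seq /= in H.
  lra.
Qed.

Lemma cos_ge_1_sub_sqr_half (x : R) : 0 <= x <= PI / 2 -> 1 - x ^ 2 / 2 <= cos x.
Proof.
  move=> Hx; have [H _] := cos_bound x 0 ltac:(lra) ltac:(lra).
  rewrite /cos_approx /cos_term /= in H.
  lra.
Qed.

Lemma two_PI_div_bounds (m n : nat) : (0 < m)%nat -> (m <= n)%nat ->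
  0 < 2 * PI / INR n <= 136 / 21 / INR m.
Proof.
  move=> Hm Hmn.
  have Hm0 : 0 < INR m by apply: lt_0_INR; apply/ltP.
  have Hmn' := INR_le_of_leq Hmn.
  have := PI_le; have := PI_RGT_0 => HPI0 HPI.
  split; first by apply: Rdiv_lt_0_compat; lra.
  apply: Rdiv_le_Rdiv; nra.
Qed.

Lemma cos_two_PI_div_ge (n : nat) : (9 <= n)%nat -> 7 / 10 <= cos (2 * PI / INR n).
Proof.
  move=> Hn; have := two_PI_div_bounds (m := 9) isT Hn; rewrite /= => Hx.
  have := cos_ge_1_sub_sqr_half (x := 2 * PI / INR n); have := PI2_3_2.
  nra.
Qed.

Lemma cos_two_PI_div_ge_of_ge10 (n : nat) : (10 <= n)%nat -> 7 / 9 <= cos (2 * PI / INR n).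
Proof.
  move=> Hn; have := two_PI_div_bounds (m := 10) isT Hn; rewrite /= => Hx.
  have := cos_ge_1_sub_sqr_half (x := 2 * PI / INR n); have := PI2_3_2.
  nra.
Qed.

Lemma cos_two_PI_div_lt1 (n : nat) : (9 <= n)%nat -> cos (2 * PI / INR n) < 1.
Proof.
  move=> Hn; have := two_PI_div_bounds (m := 9) isT Hn; rewrite /= => Hx.
  rewrite -cos_0; apply: cos_decreasing_1; have := PI2_3_2; lra.
Qed.

Lemma acos_cos_two_PI_div (n : nat) : (9 <= n)%nat ->
  acos (cos (2 * PI / INR n)) = 2 * PI / INR n.
Proof.
  move=> Hn; have := two_PI_div_bounds (m := 9) isT Hn; rewrite /= => Hx.
  apply: acos_cos; have := PI2_3_2; lra.
Qed.

Lemma acos_le_acos (x y : R) : -1 <= x <= y -> y <= 1 -> acos y <= acos x.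
Proof.
  move=> Hxy Hy; case: (Rle_or_lt (acos y) (acos x)) => // Hlt.
  have [Hx0 Hx1] := acos_bound x; have [Hy0 Hy1] := acos_bound y.
  have := cos_decreasing_1 _ _ Hx0 Hx1 Hy0 Hy1 Hlt.
  rewrite !cos_acos; lra.
Qed.

Lemma acos_le_acos_clamp (x c : R) : -1 <= c <= 1 -> x <= c ->
  acos c <= acos (Rmax (-1) (Rmin x 1)).
Proof.
  move=> Hc Hx; apply: acos_le_acos; rewrite /Rmax /Rmin; repeat case: Rle_dec; lra.
Qed.

Lemma acos_clamp_le_acos (x c : R) : -1 <= c <= 1 -> c <= x ->
  acos (Rmax (-1) (Rmin x 1)) <= acos c.
Proof.
  move=> Hc Hx; apply: acos_le_acos; rewrite /Rmax /Rmin; repeat case: Rle_dec; lra.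
Qed.

Lemma eta_gt0 (xi c : R) : 0 <= xi -> 0 <= c < 1 -> 0 < eta xi c.
Proof.
  move=> Hxi Hc; rewrite /eta; apply: Rdiv_lt_0_compat; last lra.
  have HD : 0 < 4 * (2 + c) * (1 - c) * (1 + xi) ^ 2.
    by repeat apply: Rmult_lt_0_compat; try apply: pow_lt; lra.
  have := lt_sqrt_sqr_add (2 + 5 * c - (1 + xi) ^ 2) HD.
  lra.
Qed.

Lemma eta_le (xi c : R) : 0 <= xi <= 1 / 4 -> 7 / 10 <= c <= 1 ->
  eta xi c <= 2 * (1 - c) / (2 + c).
Proof.
  move=> Hxi Hc; rewrite /eta /Rdiv; apply: Rmult_le_compat_r.
    by apply/Rlt_le/Rinv_0_lt_compat; lra.
  set s := (1 + xi) ^ 2.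
  have Hs : 1 <= s <= 25 / 16 by rewrite /s; nra.
  have : sqrt ((2 + 5 * c - s) ^ 2 + 4 * (2 + c) * (1 - c) * s)
         <= 2 + 5 * c - s + 2 * (1 - c).
    apply: sqrt_le_of_le_sqr; first lra.
    have : 0 <= (1 - c) * (3 + 4 * c - (3 + c) * s) by apply: Rmult_le_pos; nra.
    nra.
  lra.
Qed.

Lemma xi_seq_bounds (k : nat) : 0 <= xi_seq k <= 1 / 4.
Proof.
  have Hc : 7 / 10 <= cos (2 * PI / 9) < 1.
    have -> : 9 = INR 9 by rewrite /=; lra.
    by split; [apply: cos_two_PI_div_ge | apply: cos_two_PI_div_lt1].
  elim: k => [|k IH] /=; first lra.
  split; first by apply/Rlt_le/eta_gt0; lra.
  have := eta_le (c := cos (2 * PI / 9)) IH ltac:(lra).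
  have : 2 * (1 - cos (2 * PI / 9)) / (2 + cos (2 * PI / 9)) <= 1 / 4.
    by apply Rle_div_l; lra.
  lra.
Qed.

Lemma xi_inf_bounds : 0 <= xi_inf <= 1 / 4.
Proof.
  have Hlo : Rbar_le (Lim_seq (fun _ => 0)) (Lim_seq xi_seq).
    by apply: Lim_seq_le_loc; exists 0%nat => k _; case: (xi_seq_bounds k).
  have Hhi : Rbar_le (Lim_seq xi_seq) (Lim_seq (fun _ => 1 / 4)).
    by apply: Lim_seq_le_loc; exists 0%nat => k _; case: (xi_seq_bounds k).
  rewrite !Lim_seq_const in Hlo Hhi.
  rewrite /xi_inf; case: (Lim_seq xi_seq) Hlo Hhi => [x| |] //=.
Qed.

Lemma mu_const_bounds (n : nat) : (9 <= n)%nat ->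
  0 < mu_const n <= 2 * (1 - cos (2 * PI / INR n)) / (2 + cos (2 * PI / INR n)).
Proof.
  move=> Hn; have Hc := cos_two_PI_div_ge Hn; have Hc1 := cos_two_PI_div_lt1 Hn.
  split; [apply: eta_gt0 | apply: eta_le]; have := xi_inf_bounds; lra.
Qed.

Lemma b_const_bounds (n : nat) : (9 <= n)%nat -> 1 < b_const n <= 2.
Proof.
  rewrite /b_const; case: eqP => [_|Hn9 Hn]; first lra.
  have H10 : (10 <= n)%nat by rewrite ltn_neqAle eq_sym Hn andbT; apply/eqP.
  have Hc := cos_two_PI_div_ge_of_ge10 H10; have Hc1 := cos_two_PI_div_lt1 Hn.
  split.
  - have : 8 < 16 / (1 + cos (2 * PI / INR n)) by apply (Rlt_div_r 8 16); lra.
    lra.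
  - have : 16 / (1 + cos (2 * PI / INR n)) <= 9 by apply (Rle_div_l 16 9); lra.
    lra.
Qed.

Lemma b_const_cos (n : nat) : (10 <= n)%nat ->
  (9 - b_const n) / (b_const n + 7) = cos (2 * PI / INR n).
Proof.
  move=> H10; have Hc := cos_two_PI_div_ge_of_ge10 H10.
  have -> : b_const n = 16 / (1 + cos (2 * PI / INR n)) - 7.
    by rewrite /b_const; case: eqP => // Hn; move: H10; rewrite Hn.
  field; lra.
Qed.

Lemma coshE (x : R) : cosh x = (exp x + / exp x) / 2.
Proof. by rewrite /cosh exp_Ropp. Qed.

Lemma cosh_ge1 (x : R) : 1 <= cosh x.
Proof.
  rewrite coshE; have := exp_pos x; set u := exp x => Hu.
  have -> : (u + / u) / 2 = 1 + (u - 1) ^ 2 / (2 * u) by field; lra.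
  have : 0 <= (u - 1) ^ 2 / (2 * u) by apply: Rdiv_le_0_compat; [apply: pow2_ge_0 | lra].
  lra.
Qed.

Lemma cosh_lt_cosh (x y : R) : 0 <= x < y -> cosh x < cosh y.
Proof.
  move=> Hxy; rewrite !coshE.
  have Hu : 1 <= exp x by have := exp_ineq1_le x; lra.
  have Huv : exp x < exp y by apply: exp_increasing; lra.
  set u := exp x in Hu Huv *; set v := exp y in Huv *.
  have -> : (v + / v) / 2 = (u + / u) / 2 + (v - u) * (u * v - 1) / (2 * u * v) by field; lra.
  have : 0 < (v - u) * (u * v - 1) / (2 * u * v).
    by apply: Rdiv_lt_0_compat; [apply: Rmult_lt_0_compat |]; nra.
  lra.
Qed.

Lemma cosh_le_cosh (x y : R) : 0 <= x <= y -> cosh x <= cosh y.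
Proof.
  by case=> Hx [Hxy | <-]; [apply/Rlt_le/cosh_lt_cosh | apply: Rle_refl].
Qed.

Lemma cosh_arccosh (m : R) : 1 <= m -> cosh (arccosh m) = m.
Proof.
  move=> Hm; rewrite /arccosh coshE.
  have Hw := sqrt_pos (m * m - 1); have Hw2 := sqrt_sqrt (m * m - 1) ltac:(nra).
  set w := sqrt (m * m - 1) in Hw Hw2 *.
  rewrite exp_ln; last lra.
  have -> : / (m + w) = m - w by field_simplify_eq; nra.
  lra.
Qed.

Lemma arccosh_gt0 (m : R) : 1 < m -> 0 < arccosh m.
Proof.
  move=> Hm; rewrite /arccosh -ln_1; apply: ln_increasing; first lra.
  have := sqrt_pos (m * m - 1); lra.
Qed.

Lemma arccosh_ge0 (m : R) : 1 <= m -> 0 <= arccosh m.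
Proof.
  case=> [/arccosh_gt0 /Rlt_le // | <-].
  by rewrite /arccosh Rmult_1_r Rminus_diag sqrt_0 Rplus_0_r ln_1; apply: Rle_refl.
Qed.

Lemma arccosh_le_arccosh (m m' : R) : 1 <= m <= m' -> arccosh m <= arccosh m'.
Proof.
  move=> Hm; case: (Rle_or_lt (arccosh m) (arccosh m')) => // Hlt.
  have := cosh_lt_cosh (conj (arccosh_ge0 (m := m') ltac:(lra)) Hlt).
  rewrite !cosh_arccosh; lra.
Qed.

Lemma cosh_le_of_le_arccosh (l m : R) : 1 <= m -> 0 <= l <= arccosh m -> cosh l <= m.
Proof. by move=> Hm Hl; rewrite -(cosh_arccosh Hm); apply: cosh_le_cosh. Qed.

Lemma cosh_lt_of_lt_arccosh (l m : R) : 1 <= m -> 0 <= l < arccosh m -> cosh l < m.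
Proof. by move=> Hm Hl; rewrite -(cosh_arccosh Hm); apply: cosh_lt_cosh. Qed.

Lemma lt_cosh_of_arccosh_lt (l m : R) : 1 <= m -> arccosh m < l -> m < cosh l.
Proof.
  move=> Hm Hl; rewrite -{1}(cosh_arccosh Hm); apply: cosh_lt_cosh.
  by split; first exact: arccosh_ge0.
Qed.

Fixpoint bern_prod (n i : seq nat) (x : seq R) : R :=
  match n, i, x with
  | nj :: n, ij :: i, xj :: x => (xj - 1) ^ ij * (2 - xj) ^ (nj - ij) * bern_prod n i x
  | _, _, _ => 1
  end.

Fixpoint bern_indices (n : seq nat) : seq (seq nat) :=
  if n is nj :: n then
    flatten (map (fun ij => map (cons ij) (bern_indices n)) (seq.iota 0 nj.+1))
  else [:: [::]].

(* [bern_poly n c x] is the polynomial with Bernstein coefficients [c] (listed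
   in the lexicographic order of [bern_indices n]) with respect to the
   unnormalised basis prod_j (x_j - 1)^(i_j) (2 - x_j)^(n_j - i_j) of the box
   [1, 2]^(size n). *)
Definition bern_poly (n : seq nat) (c : seq Z) (x : seq R) : R :=
  foldr (fun ci acc => IZR ci.1 * bern_prod n ci.2 x + acc) 0 (zip c (bern_indices n)).

Lemma bern_prod_ge0 (n i : seq nat) (x : seq R) :
  List.Forall (fun y => 1 <= y <= 2) x -> 0 <= bern_prod n i x.
Proof.
  elim: x n i => [|y x IH] [|nj n] [|ij i] /=; try lra.
  case/List.Forall_cons_iff => Hy Hx.
  by apply: Rmult_le_pos; [apply: Rmult_le_pos; apply: pow_le; lra | apply: IH].
Qed.

Lemma bern_poly_ge0 (n : seq nat) (c : seq Z) (x : seq R) :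
  all (Z.leb 0) c -> List.Forall (fun y => 1 <= y <= 2) x -> 0 <= bern_poly n c x.
Proof.
  rewrite /bern_poly => + Hx; elim: c (bern_indices n) => [|ci c IH] [|i I] /=; try lra.
  case/andP => /Z.leb_le Hci Hc; apply: Rplus_le_le_0_compat; last exact: IH.
  by apply: Rmult_le_pos; [apply: IZR_le | apply: bern_prod_ge0].
Qed.

Definition face_form (a p r : R) : R := 2 * a * p * r + a ^ 2 + p ^ 2 + r ^ 2 - 1.

Definition phi_numer (a p q r s f : R) : R :=
  p * q + r * s + a * p * s + a * q * r - a ^ 2 * f + f.

Lemma phi_formulaE (a p q r s f : R) :
  phi_formula a p q r s f =
  phi_numer a p q r s f / (sqrt (face_form a p r) * sqrt (face_form a q s)).
Proof. by []. Qed.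

Lemma face_form_ge4 (a p r : R) : 1 <= a -> 1 <= p -> 1 <= r -> 4 <= face_form a p r.
Proof.
  move=> Ha Hp Hr; rewrite /face_form.
  have Hap : 1 <= a * p by nra.
  nra.
Qed.

(* Bernstein coefficients, in degrees (5, 2, 2, 2, 2) for (a, p, q, r, s), of
   the differences of the two sides of [phi_numer_sqr_le] and
   [phi_numer_sqr_ge] below; all of them are nonnegative. *)
Definition phi_upper_cert : seq Z := [::
  0; 0; 0; 0; 0; 0; 0; 0; 0; 0; 0; 0; 0; 0;
  0; 0; 0; 0; 0; 0; 0; 0; 0; 0; 0; 0; 0; 0;
  0; 0; 0; 0; 0; 0; 0; 0; 0; 0; 0; 0; 0; 0;
  0; 0; 0; 0; 0; 0; 0; 0; 0; 0; 0; 0; 0; 0;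
  0; 0; 0; 0; 0; 0; 0; 0; 0; 0; 0; 0; 0; 0;
  0; 0; 0; 0; 0; 0; 0; 0; 0; 0; 0; 1536; 3584; 1920;
  3584; 8192; 4224; 1920; 4224; 2016; 3584; 8448; 4608; 7680; 17920; 9472; 3456; 7872;
  3840; 1920; 4608; 2560; 3456; 8448; 4608; 864; 2304; 1152; 3584; 7680; 3456; 8448;
  17920; 7872; 4608; 9472; 3840; 8192; 17920; 8448; 17920; 39040; 17920; 8448; 17920; 7424;
  4224; 9472; 4608; 7872; 17920; 8448; 2304; 5376; 2048; 1920; 3456; 864; 4608; 8448;
  2304; 2560; 4608; 1152; 4224; 7872; 2304; 9472; 17920; 5376; 4608; 8448; 2048; 2016;
  3840; 1152; 3840; 7424; 2048; 1152; 2048; 0; 7680; 17920; 9600; 17920; 40832; 21056;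
  9600; 21056; 10112; 17920; 42112; 22912; 38656; 89408; 47040; 17664; 39680; 19328; 9600; 22912;
  12672; 17664; 42432; 22912; 4896; 12288; 6048; 17920; 38656; 17664; 42112; 89408; 39680; 22912;
  47040; 19328; 40832; 89408; 42432; 89408; 193472; 88832; 42432; 88832; 36800; 21056; 47040; 22912;
  39680; 88832; 41536; 12288; 27328; 10240; 9600; 17664; 4896; 22912; 42432; 12288; 12672; 22912;
  6048; 21056; 39680; 12288; 47040; 88832; 27328; 22912; 41536; 10240; 10112; 19328; 6048; 19328;
  36800; 10240; 6048; 10240; 0; 14112; 32976; 17680; 32976; 75016; 38712; 17680; 38712; 18696;
  32976; 77320; 41976; 71680; 164548; 86212; 33228; 73780; 35880; 17680; 41976; 23112; 33228; 78580;
  42024; 9990; 23952; 11626; 32976; 71680; 33228; 77320; 164548; 73780; 41976; 86212; 35880; 75016;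
  164548; 78580; 164548; 354180; 162736; 78580; 162736; 67444; 38712; 86212; 42024; 73780; 162736; 75508;
  23952; 51220; 18912; 17680; 33228; 9990; 41976; 78580; 23952; 23112; 42024; 11626; 38712; 73780;
  23952; 86212; 162736; 51220; 42024; 75508; 18912; 18696; 35880; 11626; 35880; 67444; 18912; 11626;
  18912; 0; 11232; 26352; 14160; 26352; 59988; 31012; 14160; 31012; 15060; 26352; 61752; 33480;
  57828; 132010; 68934; 27178; 59806; 29044; 14160; 33480; 18360; 27178; 63426; 33624; 8715; 20188;
  9681; 26352; 57828; 27178; 61752; 132010; 59806; 33480; 68934; 29044; 59988; 132010; 63426; 132010;
  283226; 130312; 63426; 130312; 54066; 31012; 68934; 33624; 59806; 130312; 60054; 20188; 41862; 15264;
  14160; 27178; 8715; 33480; 63426; 20188; 18360; 33624; 9681; 31012; 59806; 20188; 68934; 130312;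
  41862; 33624; 60054; 15264; 15060; 29044; 9681; 29044; 54066; 15264; 9681; 15264; 0; 3240;
  7668; 4140; 7668; 17532; 9096; 4140; 9096; 4444; 7668; 18018; 9774; 17046; 38814; 20232;
  8124; 17776; 8628; 4140; 9774; 5346; 8124; 18774; 9882; 2743; 6198; 2943; 7668; 17046;
  8124; 18018; 38814; 17776; 9774; 20232; 8628; 17532; 38814; 18774; 38814; 83254; 38400; 18774;
  38400; 15966; 9096; 20232; 9882; 17776; 38400; 17604; 6198; 12564; 4536; 4140; 8124; 2743;
  9774; 18774; 6198; 5346; 9882; 2943; 9096; 17776; 6198; 20232; 38400; 12564; 9882; 17604;
  4536; 4444; 8628; 2943; 8628; 15966; 4536; 2943; 4536; 0]%Z.

Definition phi_lower_cert : seq Z := [::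
  0; 0; 0; 0; 0; 0; 0; 0; 0; 0; 0; 0; 0; 0;
  0; 0; 0; 0; 0; 0; 0; 0; 0; 0; 0; 0; 0; 0;
  0; 0; 0; 0; 0; 0; 0; 0; 0; 0; 0; 0; 0; 0;
  0; 0; 0; 0; 0; 0; 0; 0; 0; 0; 0; 0; 0; 0;
  0; 0; 0; 0; 0; 0; 0; 0; 0; 0; 0; 0; 0; 0;
  0; 0; 0; 0; 0; 0; 0; 0; 0; 0; 0; 0; 96; 144;
  96; 528; 576; 144; 576; 540; 96; 448; 448; 560; 2000; 1728; 624; 1992;
  1584; 144; 448; 352; 624; 1792; 1312; 612; 1680; 1176; 96; 560; 624; 448;
  2000; 1992; 448; 1728; 1584; 528; 2000; 1792; 2000; 6816; 5696; 1792; 5696; 4512;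
  576; 1728; 1312; 1992; 5696; 4144; 1680; 4640; 3264; 144; 624; 612; 448; 1792;
  1680; 352; 1312; 1176; 576; 1992; 1680; 1728; 5696; 4640; 1312; 4144; 3264; 540;
  1584; 1176; 1584; 4512; 3264; 1176; 3264; 2304; 0; 432; 660; 432; 2376; 2604;
  660; 2604; 2421; 432; 2088; 2112; 2520; 9200; 8000; 2836; 9130; 7248; 660; 2112;
  1680; 2836; 8320; 6144; 2785; 7744; 5436; 432; 2520; 2836; 2088; 9200; 9130; 2112;
  8000; 7248; 2376; 9200; 8320; 9200; 31740; 26576; 8320; 26576; 20976; 2604; 8000; 6144;
  9130; 26576; 19464; 7744; 21648; 15264; 660; 2836; 2785; 2112; 8320; 7744; 1680; 6144;
  5436; 2604; 9130; 7744; 8000; 26576; 21648; 6144; 19464; 15264; 2421; 7248; 5436; 7248;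
  20976; 15264; 5436; 15264; 10800; 0; 648; 1044; 648; 3636; 4098; 1044; 4098; 3831;
  648; 3312; 3456; 3852; 14592; 12960; 4494; 14688; 11748; 1044; 3456; 2808; 4494; 13536;
  10152; 4497; 12684; 8964; 648; 3852; 4494; 3312; 14592; 14688; 3456; 12960; 11748; 3636;
  14592; 13536; 14592; 51456; 43680; 13536; 43680; 34632; 4098; 12960; 10152; 14688; 43680; 32400;
  12684; 35928; 25488; 1044; 4494; 4497; 3456; 13536; 12684; 2808; 10152; 8964; 4098; 14688;
  12684; 12960; 43680; 35928; 10152; 32400; 25488; 3831; 11748; 8964; 11748; 34632; 25488; 8964;
  25488; 18144; 0; 324; 621; 324; 1998; 2484; 621; 2484; 2415; 324; 1890; 2160;
  2106; 8694; 8208; 2754; 9318; 7668; 621; 2160; 1836; 2754; 8640; 6696; 2928; 8424;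
  6048; 324; 2106; 2754; 1890; 8694; 9318; 2160; 8208; 7668; 1998; 8694; 8640; 8694;
  32286; 28620; 8640; 28620; 23220; 2484; 8208; 6696; 9318; 28620; 21816; 8424; 24300; 17496;
  621; 2754; 2928; 2160; 8640; 8424; 1836; 6696; 6048; 2484; 9318; 8424; 8208; 28620;
  24300; 6696; 21816; 17496; 2415; 7668; 6048; 7668; 23220; 17496; 6048; 17496; 12636; 0;
  0; 81; 0; 162; 378; 81; 378; 441; 0; 162; 324; 162; 1134; 1404;
  432; 1656; 1512; 81; 324; 324; 432; 1512; 1296; 576; 1728; 1296; 0; 162;
  432; 162; 1134; 1656; 324; 1404; 1512; 162; 1134; 1512; 1134; 5274; 5508; 1512;
  5508; 4860; 378; 1404; 1296; 1656; 5508; 4536; 1728; 5184; 3888; 81; 432; 576;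
  324; 1512; 1728; 324; 1296; 1296; 378; 1656; 1728; 1404; 5508; 5184; 1296; 4536;
  3888; 441; 1512; 1296; 1512; 4860; 3888; 1296; 3888; 2916]%Z.

Section PhiBounds.

Variables a p q r s : R.
Hypotheses (Ha : 1 <= a <= 2) (Hp : 1 <= p <= 2) (Hq : 1 <= q <= 2)
  (Hr : 1 <= r <= 2) (Hs : 1 <= s <= 2).

Let bern_box_ge0 (c : seq Z) :
  all (Z.leb 0) c -> 0 <= bern_poly [:: 5; 2; 2; 2; 2]%nat c [:: a; p; q; r; s].
Proof.
  move=> Hc; apply: bern_poly_ge0 => //.
  by do ![apply: List.Forall_nil | apply: List.Forall_cons].
Qed.

Lemma phi_numer_sqr_le :
  ((a + 7) * phi_numer a p q r s 1) ^ 2 <= (9 - a) ^ 2 * (face_form a p r * face_form a q s).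
Proof.
  apply/Rminus_le_0.
  rewrite (_ : _ - _ = bern_poly [:: 5; 2; 2; 2; 2]%nat phi_upper_cert [:: a; p; q; r; s]).
    exact: bern_box_ge0.
  rewrite /bern_poly /phi_upper_cert /face_form /phi_numer.
  by cbv -[IZR Rplus Rmult Rminus Ropp pow]; ring.
Qed.

Lemma phi_numer_sqr_ge :
  (2 * (2 - a)) ^ 2 * (face_form a p r * face_form a q s) <= ((1 + a) * phi_numer a p q r s 2) ^ 2.
Proof.
  apply/Rminus_le_0.
  rewrite (_ : _ - _ = bern_poly [:: 5; 2; 2; 2; 2]%nat phi_lower_cert [:: a; p; q; r; s]).
    exact: bern_box_ge0.
  rewrite /bern_poly /phi_lower_cert /face_form /phi_numer.
  by cbv -[IZR Rplus Rmult Rminus Ropp pow]; ring.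
Qed.

Let face_pr : 4 <= face_form a p r.
Proof. by apply: face_form_ge4; lra. Qed.

Let face_qs : 4 <= face_form a q s.
Proof. by apply: face_form_ge4; lra. Qed.

Let faces_ge0 : 0 <= face_form a p r * face_form a q s.
Proof. by nra. Qed.

Let sqrt_faces_pos : 0 < sqrt (face_form a p r * face_form a q s).
Proof. by apply: sqrt_lt_R0; nra. Qed.

Lemma phi_formula_le (f : R) : 1 <= f <= 2 -> phi_formula a p q r s f <= (9 - a) / (a + 7).
Proof.
  move=> Hf; rewrite phi_formulaE -sqrt_mult; try lra.
  apply: Rdiv_le_Rdiv; [exact: sqrt_faces_pos | lra |].
  have numer_le : phi_numer a p q r s f <= phi_numer a p q r s 1.
    have : 0 <= (a ^ 2 - 1) * (f - 1) by apply: Rmult_le_pos; nra.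
    rewrite /phi_numer; nra.
  have := le_mul_sqrt (k := 9 - a) ltac:(lra) faces_ge0 phi_numer_sqr_le.
  nra.
Qed.

Lemma phi_formula_ge (f : R) : 1 <= f <= 2 -> 2 * (2 - a) / (1 + a) <= phi_formula a p q r s f.
Proof.
  move=> Hf; rewrite phi_formulaE -sqrt_mult; try lra.
  apply: Rdiv_le_Rdiv; [lra | exact: sqrt_faces_pos |].
  have numer_ge : phi_numer a p q r s 2 <= phi_numer a p q r s f.
    have : 0 <= (a ^ 2 - 1) * (2 - f) by apply: Rmult_le_pos; nra.
    rewrite /phi_numer; nra.
  have numer2_ge0 : 0 <= phi_numer a p q r s 2.
    have Hpq : 1 <= p * q by nra.
    have Hrs : 1 <= r * s by nra.
    have Hps : 1 <= p * s by nra.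
    have Hqr : 1 <= q * r by nra.
    rewrite /phi_numer; nra.
  have Hx : 0 <= (1 + a) * phi_numer a p q r s 2 by nra.
  have := mul_sqrt_le Hx faces_ge0 phi_numer_sqr_ge.
  nra.
Qed.

End PhiBounds.

Lemma enum_set2 (T : finType) (x0 : T) (A : {set T}) : #|A| = 2%nat ->
  [set nth x0 (enum A) 0; nth x0 (enum A) 1] = A.
Proof.
  rewrite cardE => HA; apply/setP => z; rewrite !inE -mem_enum.
  by case: (enum A) HA => [|x [|y [|w t]]] //= _; rewrite !inE.
Qed.

Section Dihedral.

Variables (M : pseudo3) (l : edgE M -> R).
Hypothesis l_range : forall e, 0 <= l e <= arccosh 2.

Lemma elen_hedge (he : hedge (tet M)) :
  elen l (val he).1 (nth ord0 (enum (val he).2) 0) (nth ord0 (enum (val he).2) 1) = l (PE he).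
Proof.
  rewrite /elen enum_set2; last exact/eqP/(valP he).
  by rewrite -surjective_pairing valK.
Qed.

Lemma cosh_elen_bounds (t : tet M) (i j : 'I_4) : 1 <= cosh (elen l t i j) <= 2.
Proof.
  split; first exact: cosh_ge1.
  rewrite /elen; case: insub => [y|]; last by rewrite cosh_0; lra.
  by apply: cosh_le_of_le_arccosh; [lra | apply: l_range].
Qed.

Lemma cosh_l_bounds (e : edgE M) : 1 <= cosh (l e) <= 2.
Proof.
  split; first exact: cosh_ge1.
  by apply: cosh_le_of_le_arccosh; [lra | apply: l_range].
Qed.

Lemma acos_le_dihedral (he : hedge (tet M)) :
  acos ((9 - cosh (l (PE he))) / (cosh (l (PE he)) + 7)) <= dihedral l he.
Proof.
  have Ha := cosh_l_bounds (PE he).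
  rewrite /dihedral /= elen_hedge; apply: acos_le_acos_clamp.
    by split; [apply (Rle_div_r (-1)) | apply (Rle_div_l _ 1)]; lra.
  by apply: phi_formula_le => //; apply: cosh_elen_bounds.
Qed.

Lemma dihedral_le_acos (he : hedge (tet M)) :
  dihedral l he <= acos (2 * (2 - cosh (l (PE he))) / (1 + cosh (l (PE he)))).
Proof.
  have Ha := cosh_l_bounds (PE he).
  rewrite /dihedral /= elen_hedge; apply: acos_clamp_le_acos.
    by split; [apply (Rle_div_r (-1)) | apply (Rle_div_l _ 1)]; lra.
  by apply: phi_formula_ge => //; apply: cosh_elen_bounds.
Qed.

End Dihedral.

Lemma big_Rplus_le (I : finType) (P : pred I) (F G : I -> R) :
  (forall i, P i -> F i <= G i) -> \big[Rplus/0]_(i | P i) F i <= \big[Rplus/0]_(i | P i) G i.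
Proof. by move=> H; apply: (big_ind2 (fun x y => x <= y)) => // *; lra. Qed.

Lemma big_Rplus_const (I : finType) (A : {set I}) (c : R) :
  \big[Rplus/0]_(i in A) c = INR #|A| * c.
Proof.
  rewrite big_const; elim: #|A| => [|n IH]; first by rewrite /=; lra.
  by rewrite iterS IH S_INR; lra.
Qed.

Section Curvature.

Variables (M : pseudo3) (l : edgE M -> R) (e : edgE M).

Lemma sum_fiber_const (c : R) :
  \big[Rplus/0]_(x : hedge (tet M) | PE x == e) c = INR (vdeg e) * c.
Proof. by rewrite /vdeg -big_Rplus_const; apply: eq_bigl => x; rewrite inE. Qed.

Hypothesis vdeg_pos : (0 < vdeg e)%nat.

Let INR_vdeg_pos : 0 < INR (vdeg e).
Proof. by apply: lt_0_INR; apply/ltP. Qed.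

Lemma Ktilde_le0 :
  (forall x, PE x == e -> 2 * PI / INR (vdeg e) <= dihedral l x) -> Ktilde l e <= 0.
Proof.
  move=> H; rewrite /Ktilde; have := big_Rplus_le H; rewrite sum_fiber_const.
  have -> : INR (vdeg e) * (2 * PI / INR (vdeg e)) = 2 * PI by field; lra.
  lra.
Qed.

Lemma Ktilde_ge0 :
  (forall x, PE x == e -> dihedral l x <= 2 * PI / INR (vdeg e)) -> 0 <= Ktilde l e.
Proof.
  move=> H; rewrite /Ktilde; have := big_Rplus_le H; rewrite sum_fiber_const.
  have -> : INR (vdeg e) * (2 * PI / INR (vdeg e)) = 2 * PI by field; lra.
  lra.
Qed.

End Curvature.

Section CurvatureSign.

Variables (M : pseudo3) (l : edgE M -> R) (e : edgE M).
Hypothesis l_range : forall e', 0 <= l e' <= arccosh 2.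

Lemma Ktilde_le0_above_b :
  (10 <= vdeg e)%nat -> arccosh (b_const (vdeg e)) < l e -> Ktilde l e <= 0.
Proof.
  move=> H10 Hlt; have H9 : (9 <= vdeg e)%nat by apply: ltnW.
  apply: Ktilde_le0; first exact: leq_trans H9.
  move=> x /eqP Hx; rewrite -(acos_cos_two_PI_div H9) -(b_const_cos H10).
  apply: Rle_trans (acos_le_dihedral l_range x); rewrite Hx.
  have Hb := b_const_bounds H9.
  have Ha := lt_cosh_of_arccosh_lt (m := b_const (vdeg e)) ltac:(lra) Hlt.
  have Ha2 := cosh_l_bounds l_range e.
  apply: acos_le_acos; last by apply (Rle_div_l _ 1); lra.
  split; first by apply (Rle_div_r (-1)); lra.
  apply: Rdiv_le_Rdiv; nra.
Qed.

Lemma Ktilde_ge0_below_mu : (9 <= vdeg e)%nat -> l e < arccosh (1 + mu_const (vdeg e)) ->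
  0 <= Ktilde l e.
Proof.
  move=> H9 Hlt; apply: Ktilde_ge0; first exact: leq_trans H9.
  move=> x /eqP Hx; rewrite -(acos_cos_two_PI_div H9).
  apply: Rle_trans (dihedral_le_acos l_range x) _; rewrite Hx.
  have Hc := cos_two_PI_div_ge H9; have Hmu := mu_const_bounds H9.
  set c := cos (2 * PI / INR (vdeg e)) in Hc Hmu *.
  have Hmu' : mu_const (vdeg e) * (2 + c) <= 2 * (1 - c) by apply Rle_div_r; lra.
  have Ha := cosh_lt_of_lt_arccosh (m := 1 + mu_const (vdeg e)) ltac:(lra)
    (conj (proj1 (l_range e)) Hlt).
  have Ha2 := cosh_l_bounds l_range e.
  apply: acos_le_acos; last by apply (Rle_div_l _ 1); lra.
  split; first lra.
  apply Rle_div_r; nra.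
Qed.

End CurvatureSign.

Lemma le_of_derive_nonpos (g dg : R -> R) (a b : R) : a <= b ->
  (forall x, a <= x <= b -> is_derive g x (dg x)) -> (forall x, a < x < b -> dg x <= 0) ->
  g b <= g a.
Proof.
  case=> [Hab | <-] Hd Hneg; last exact: Rle_refl.
  have Hd' x : a <= x <= b -> derivable_pt_lim g x (dg x) by move/Hd/is_derive_Reals.
  have [c [Hgc Hc]] := MVT_cor2 g dg a b Hab Hd'.
  have := Hneg c Hc; nra.
Qed.

Lemma ball_Rabs (x e y : R) : ball x e y <-> Rabs (y - x) < e.
Proof. by []. Qed.

Section Barrier.

Variables (f df : R -> R) (t0 U : R).
Hypotheses (f_derive : forall t, 0 < t -> is_derive f t (df t))
  (f_cont0 : filterlim f (at_right 0) (locally (f 0))).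

Let f_cont (t : R) : 0 < t -> continuous f t.
Proof. by move=> Ht; apply: ex_derive_continuous; exists (df t); apply: f_derive. Qed.

Let f_right_cont (t : R) : 0 <= t -> filterlim f (at_right t) (locally (f t)).
Proof.
  case=> [Ht | <-] //.
  by apply: filterlim_filter_le_1 (f_cont Ht); apply: filter_le_within.
Qed.

(* If f t1 > U, let [s] be the last time before [t1] with f s <= U: on
   (s, t1] f > U makes f nonincreasing, so f stays >= f t1 > f s just after
   [s], contradicting right-continuity at [s]. *)
Lemma barrier_upper : f 0 < U -> (forall t, 0 < t <= t0 -> U < f t -> df t <= 0) ->
  forall t, 0 <= t <= t0 -> f t <= U.
Proof.
  move=> H0 Hneg t1 Ht1; case: (Rle_or_lt (f t1) U) => // Hgt; exfalso.
  have t1_pos : 0 < t1 by case: Ht1 => [[// | E]] _; rewrite -E in Hgt; lra.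
  pose S t := 0 <= t <= t1 /\ f t <= U.
  have [s [s_ub s_lub]] : {s | is_lub S s}.
    apply: completeness; first by exists t1 => t [[_ ?] _].
    by exists 0; split; lra.
  have s_ge0 : 0 <= s by apply: s_ub; split; lra.
  have s_le : s <= t1 by apply: s_lub => t [[_ ?] _].
  have fs_le : f s <= U.
    case: (Rle_or_lt (f s) U) => // Hfs; exfalso.
    have s_pos : 0 < s by case: s_ge0 => // E; rewrite -E in Hfs; lra.
    have [eps Heps] := f_cont s_pos (open_gt _ _ Hfs).
    have : s <= s - eps.
      apply: s_lub => t [Ht Hft]; case: (Rle_or_lt t (s - eps)) => // Hlt.
      have Hts : t <= s by apply: s_ub.
      have : U < f t by apply: Heps; apply/ball_Rabs; rewrite Rabs_left1; lra.
      lra.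
    have := cond_pos eps; lra.
  have s_lt : s < t1 by case: s_le => // E; rewrite E in fs_le; lra.
  have above t : s < t <= t1 -> U < f t.
    move=> Ht; case: (Rle_or_lt (f t) U) => // Hft.
    have : t <= s by apply: s_ub; split; [lra | exact: Hft].
    lra.
  have decr s' : s < s' < t1 -> f t1 <= f s'.
    move=> Hs'; apply: le_of_derive_nonpos; first lra.
    - by move=> x Hx; apply: f_derive; lra.
    - by move=> x Hx; apply: Hneg; [lra | apply: above; lra].
  have [eps Heps] := f_right_cont s_ge0 (open_lt _ _ (Rle_lt_trans _ _ _ fs_le Hgt)).
  pose s' := s + Rmin eps (t1 - s) / 2.
  have Hmin : 0 < Rmin eps (t1 - s) <= t1 - s /\ Rmin eps (t1 - s) <= eps.
    split; last exact: Rmin_l.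
    by split; [apply: Rmin_glb_lt; [apply: cond_pos | lra] | apply: Rmin_r].
  have := decr s' ltac:(rewrite /s'; lra).
  have : f s' < f t1.
    by apply: Heps; [apply/ball_Rabs; rewrite /s' Rabs_pos_eq | rewrite /s']; lra.
  lra.
Qed.

End Barrier.

Lemma barrier_lower (f df : R -> R) (t0 L : R) :
  (forall t, 0 < t -> is_derive f t (df t)) -> filterlim f (at_right 0) (locally (f 0)) ->
  L < f 0 -> (forall t, 0 < t <= t0 -> f t < L -> 0 <= df t) ->
  forall t, 0 <= t <= t0 -> L <= f t.
Proof.
  move=> Hd Hc H0 Hpos t Ht.
  suff : - f t <= - L by lra.
  apply: (barrier_upper (f := fun s => - f s) (df := fun s => - df s)) Ht.
  - by move=> s Hs; apply: is_derive_opp; apply: Hd.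
  - exact: filterlim_comp Hc (filterlim_opp _).
  - lra.
  - by move=> s Hs Hlt; have := Hpos s Hs; lra.
Qed.

Theorem theorem4p7 (M : pseudo3) (l0 : edgE M -> R) (l : R -> edgE M -> R) :
  (forall e : edgE M, (9 <= vdeg e)%nat) ->
  (forall e : edgE M, 0 < l0 e < arccosh 2) ->
  (forall e : edgE M, arccosh (1 + mu_const (vdeg e)) < l0 e < arccosh (b_const (vdeg e))) ->
  ext_ricci_flow l0 l ->
  forall t0, 0 < t0 ->
  (forall t (e : edgE M), 0 <= t <= t0 -> l t e <= arccosh 2) ->
  (forall t (e : edgE M), 0 <= t <= t0 ->
     arccosh (1 + mu_const (vdeg e)) <= l t e <= arccosh (b_const (vdeg e))) /\
  (forall e : edgE M, 0 < arccosh (1 + mu_const (vdeg e)) /\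
             arccosh (b_const (vdeg e)) <= arccosh 2).
Proof.
  move=> Hv _ Hl0 [l_init [l_pos [l_cont0 l_flow]]] t0 _ Hsup.
  have l_range s : 0 <= s <= t0 -> forall e, 0 <= l s e <= arccosh 2.
    by move=> Hs e; split; [apply/Rlt_le/l_pos | apply: Hsup]; lra.
  have l_cont e : filterlim (fun s => l s e) (at_right 0) (locally (l 0 e)) by rewrite l_init.
  split=> [t e Ht | e]; last first.
    have [Hmu _] := mu_const_bounds (Hv e); have Hb := b_const_bounds (Hv e).
    by split; [apply: arccosh_gt0 | apply: arccosh_le_arccosh]; lra.
  have flow s : 0 < s -> is_derive (fun u => l u e) s (Ktilde (l s) e * l s e) := l_flow s e.
  split.
  - apply: (barrier_lower flow (l_cont e)) Ht; first by rewrite l_init; case: (Hl0 e).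
    move=> s Hs Hlt; apply: Rmult_le_pos; last by apply/Rlt_le/l_pos; lra.
    by apply: (Ktilde_ge0_below_mu (l_range s _)) => //; lra.
  - case: (leqP 10 (vdeg e)) => H10.
    + apply: (barrier_upper flow (l_cont e)) Ht; first by rewrite l_init; case: (Hl0 e).
      move=> s Hs Hgt; apply: Rmult_le_0_r; last by apply/Rlt_le/l_pos; lra.
      by apply: (Ktilde_le0_above_b (l_range s _)) => //; lra.
    + have -> : vdeg e = 9%nat by apply/eqP; rewrite eqn_leq Hv andbT -ltnS.
      exact: Hsup.
Qed.
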